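(* Let $\mathbb{K}$ be a field and let $\mathcal F=(f_1,\dots,f_t)$, $t\ge2$, be polynomials in $\mathbb{K}[x,y]$ of $y$-degree at most $d_y$ generating an ideal $I$ of dimension zero. Write $f_i=\sum_{j=0}^{d_y} f_{i,j}y^j$ with $f_{i,j}\in\mathbb{K}[x]$. Let $D\ge\Delta(\mathcal F)$ be an integer, and let $\mathbf S=[\mathbf S_1\cdots\mathbf S_t]\in\mathbb{K}[x]^{(d_y+D)\times tD}$, where $\mathbf S_i\in\mathbb{K}[x]^{(d_y+D)\times D}$ is the matrix whose $\ell$-th column ($\ell=1,\dots,D$) has the entries $f_{i,d_y},f_{i,d_y-1},\dots,f_{i,0}$ in rows $\ell,\ell+1,\dots,\ell+d_y$ and zeros elsewhere (equivalently, the $\ell$-th column is $\pi_{d_y+D}(y^{D-\ell}f_i)$). Let $c_1,\dots,c_K$ be the nonzero columns of the Hermite normal form $\mathbf H$ of $\mathbf S$. Then there exists $K'\le K$ such that $\pi_{d_y+D}^{-1}(c_{K'})$ is monic in $y$ (i.e., its coefficient of highest power of $y$ is $1$); and, with $K'$ the largest such integer, $\pi_{d_y+D}^{-1}(c_K),\pi_{d_y+D}^{-1}(c_{K-1}),\dots,\pi_{d_y+D}^{-1}(c_{K'})$ is the detaching basis of $I$ in degree $n_0$ (namely $\pi_{d_y+D}^{-1}(c_{K-i})=A_i$ for $i=0,\dots,n_0$).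
   Context: Let $\mathbb{K}$ be a field. For an ideal $I\subseteq\mathbb{K}[x,y]$, let $\mathcal G=(g_0,\dots,g_s)$ be its reduced minimal Gröbner basis for the lexicographic order with $x\prec y$, listed in decreasing order, and $n_i=\deg_y(g_i)$ (so $n_0>\cdots>n_s$). Define $A_0,A_1,\dots$ recursively: for $0\le i<n_s$, $A_i=0$; if $n_k=i$ for some $k$, $A_i=g_k$; otherwise $A_i$ is obtained from $yA_{i-1}$ by replacing its part of $y$-degree $<i$ by the normal form of that part modulo $\mathcal G$. For $n\ge n_0$, the detaching basis of $I$ in degree $n$ is $(A_{n_s},\dots,A_n)$. For $\mathcal F=(f_1,\dots,f_t)$ generating $I$, $\Delta(\mathcal F)$ is the minimal integer $\Delta$ such that for each $i=n_s,\dots,n_0$ there exist $w_{i,1},\dots,w_{i,t}\in\mathbb{K}[x,y]$, all of $y$-degree less than $\Delta$, with $A_i=\sum_{j=1}^t w_{i,j}f_j$. For $n\ge1$, $\pi_n$ is the $\mathbb{K}[x]$-module isomorphism from $\{f\in\mathbb{K}[x,y]:\deg_y f<n\}$ to $\mathbb{K}[x]^n$ sending $f_0+f_1y+\cdots+f_{n-1}y^{n-1}$ to $[f_{n-1},\dots,f_1,f_0]^\top$. Hermite normal forms are with respect to column operations: the Hermite normal form of $\mathbf S\in\mathbb{K}[x]^{n\times m}$ is the unique matrix $\mathbf H=\mathbf S\mathbf U$, with $\mathbf U\in\mathbb{K}[x]^{m\times m}$ unimodular, such that its nonzero columns are the first ones, it is in lower echelon form (the index of the first nonzero entry, the pivot,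 of each nonzero column strictly increases with the column index), every pivot is monic in $x$, and in the row of each pivot all entries in earlier columns have $x$-degree less than that pivot. *)

(* Bivariate polynomials K[x,y] are {poly {poly K}}:
   the outer variable is y, the inner one is x.  p`_b is the coefficient of
   y^b (an element of K[x]), and (p`_b)`_a is the coefficient of x^a y^b. *)
From HB Require Import structures.
From mathcomp Require Import all_boot all_order all_algebra.
Set Implicit Arguments. Unset Strict Implicit. Unset Printing Implicit Defensive.
Import Order.TTheory GRing.Theory Num.Theory.
Local Open Scope ring_scope.

Section Defs.
Variable K : fieldType.
Local Notation P2 := {poly {poly K}}.

Definition in_ideal (F : seq P2) (p : P2) : Prop :=
  exists w : 'I_(size F) -> P2, p = \sum_(j < size F) w j * F`_j.

Definition coef2 (p : P2) (a b : nat) : K := (p`_b)`_a.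

(* y-degree, and the leading monomial (a,b) ~ x^a y^b for lex order x < y *)
Definition ydeg (p : P2) : nat := (size p).-1.
Definition lm (p : P2) : nat * nat := ((size (lead_coef p)).-1, ydeg p).
Definition lc2 (p : P2) : K := lead_coef (lead_coef p).

Definition mdiv (m1 m2 : nat * nat) : bool := (m1.1 <= m2.1)%N && (m1.2 <= m2.2)%N.
Definition mlt (m1 m2 : nat * nat) : bool :=
  (m1.2 < m2.2)%N || ((m1.2 == m2.2) && (m1.1 < m2.1)%N).

Definition groebner (F G : seq P2) : Prop :=
  (forall g, g \in G -> in_ideal F g) /\
  (forall p, in_ideal F p -> p != 0 ->
     exists2 g, g \in G & (g != 0) && mdiv (lm g) (lm p)).

Definition reduced (G : seq P2) : Prop :=
  forall i, (i < size G)%N ->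
    [/\ G`_i != 0, lc2 G`_i = 1 &
      forall j, (j < size G)%N -> j != i ->
        forall a b, coef2 G`_i a b != 0 -> ~~ mdiv (lm G`_j) (a, b)].

Definition is_rGB (F G : seq P2) : Prop :=
  [/\ groebner F G, reduced G & sorted (fun g h => mlt (lm h) (lm g)) G].

Definition n0 (G : seq P2) : nat := ydeg (head 0 G).
Definition ns (G : seq P2) : nat := ydeg (last 0 G).

Definition is_NF (F G : seq P2) (q r : P2) : Prop :=
  in_ideal F (q - r) /\
  forall a b, coef2 r a b != 0 -> forall g, g \in G -> ~~ mdiv (lm g) (a, b).

Definition is_Aseq (F G : seq P2) (A : nat -> P2) : Prop :=
  forall i,
    [/\ (i < ns G)%N -> A i = 0,
        (forall k, (k < size G)%N -> ydeg G`_k = i -> A i = G`_k) &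
        ((ns G <= i)%N -> (forall k, (k < size G)%N -> ydeg G`_k != i) ->
          exists r, is_NF F G (take_poly i ('X * A i.-1)) r /\
            A i = 'X * A i.-1 - take_poly i ('X * A i.-1) + r)].

Definition detaching_basis (G : seq P2) (A : nat -> P2) (n : nat) : seq P2 :=
  [seq A i | i <- iota (ns G) (n - ns G).+1].

Definition Delta_ok (F G : seq P2) (A : nat -> P2) (Delta : nat) : Prop :=
  forall i, (ns G <= i <= n0 G)%N ->
    exists w : 'I_(size F) -> P2,
      (forall j, (size (w j) <= Delta)%N) /\ A i = \sum_(j < size F) w j * F`_j.
Definition is_Delta (F G : seq P2) (A : nat -> P2) (Delta : nat) : Prop :=
  Delta_ok F G A Delta /\ forall D', Delta_ok F G A D' -> (Delta <= D')%N.

(* <F> has dimension zero: proper, and K[x,y]/<F> finite-dimensional over K *)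
Definition zero_dim (F : seq P2) : Prop :=
  ~ in_ideal F 1 /\
  exists B : seq P2, forall p : P2, exists c : 'I_(size B) -> K,
    in_ideal F (p - \sum_(j < size B) (c j)%:P%:P * B`_j).

Definition pi (n : nat) (f : P2) : 'cV[{poly K}]_n := \col_(r < n) f`_(n.-1 - r).
Definition piinv (n : nat) (c : 'cV[{poly K}]_n) : P2 :=
  \sum_(r < n) (c r 0)%:P * 'X^(n.-1 - r).

(* the matrix S = [S_1 ... S_t]; column c = i*D + l (0-based) is
   pi_{dy+D}(y^(D-1-l) f_i) *)
Definition Smat (F : seq P2) (dy D : nat) : 'M[{poly K}]_(dy + D, size F * D) :=
  \matrix_(r, c) (pi (dy + D) ('X^(D.-1 - (c %% D)) * F`_(c %/ D))) r 0.

Definition is_HNF (m n : nat) (H : 'M[{poly K}]_(m, n)) (Kc : nat) : Prop :=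
  (Kc <= n)%N /\
  (forall j : 'I_n, (Kc <= j)%N -> col j H = 0) /\
  exists piv : 'I_n -> 'I_m,
    (forall j : 'I_n, (j < Kc)%N ->
       [/\ H (piv j) j \is monic,
           (forall r : 'I_m, (r < piv j)%N -> H r j = 0) &
           (forall j' : 'I_n, (j' < j)%N -> (size (H (piv j) j') < size (H (piv j) j))%N)]) /\
    (forall j1 j2 : 'I_n, (j1 < j2)%N -> (j2 < Kc)%N -> (piv j1 < piv j2)%N).

(* pi^{-1} of the column of index j (0-based), 0 if out of range *)
Definition colpoly (m n : nat) (H : 'M[{poly K}]_(m, n)) (j : nat) : P2 :=
  if (insub j : option 'I_n) is Some c then piinv (col c H) else 0.

End Defs.

(* The columns of [Smat F dy D] are the pi-images of the products y^e f_j with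
   e < D, so the columns of H = S U span exactly the pi-images of the
   combinations sum_j w_j f_j with deg_y w_j < D.  All of these lie in I, and
   since D >= Delta(F) every A_i with i <= n_0 is one of them.  As A_i has
   y-degree i, lower echelon form forces a pivot in row m-1-i whose entry
   divides lc_y(A_i); these rows being hit for i = 0..n_0, they are the pivot
   rows of the last n_0+1 nonzero columns.  The polynomial B_i of column K-i is
   in I with y-degree i, so lc_y(A_i) divides lc_y(B_i) by the Groebner
   property; both are monic, hence equal.  Then B_i - A_i lies in I with some
   y-degree k < i, and its leading coefficient has smaller x-degree than
   lc_y(A_k) (Hermite reduction on the B side, reducedness on the A side),
   contradicting the minimality of lc_y(A_k); so B_i = A_i.  Finally
   zero-dimensionality makes lc_y(g_0) = 1, so A_{n_0} = g_0 is monic while for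
   i < n_0 the leading coefficient of A_i is that of some g_k, k > 0, which is
   not constant. *)

From Pilot Require Import Defs.
From HB Require Import structures.
From mathcomp Require Import all_boot all_order all_algebra.
From mathcomp Require Import zify.
Import Order.TTheory GRing.Theory Num.Theory.
Local Open Scope ring_scope.
Set Implicit Arguments. Unset Strict Implicit. Unset Printing Implicit Defensive.

Section Ideal.
Variables (K : fieldType) (F : seq {poly {poly K}}).

Lemma in_ideal0 : in_ideal F 0.
Proof. by exists (fun _ => 0); rewrite big1 // => j _; rewrite mul0r. Qed.

Lemma in_idealD p q : in_ideal F p -> in_ideal F q -> in_ideal F (p + q).
Proof.
move=> [w ->] [w' ->]; exists (fun j => w j + w' j).
by rewrite -big_split; apply: eq_bigr => j _; rewrite mulrDl.
Qed.

Lemma in_idealMl c p : in_ideal F p -> in_ideal F (c * p).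
Proof.
move=> [w ->]; exists (fun j => c * w j).
by rewrite mulr_sumr; apply: eq_bigr => j _; rewrite mulrA.
Qed.

Lemma in_idealB p q : in_ideal F p -> in_ideal F q -> in_ideal F (p - q).
Proof. by move=> hp hq; rewrite -mulN1r; apply/in_idealD/in_idealMl. Qed.

Lemma in_ideal_sum (I : finType) (f : I -> {poly {poly K}}) :
  (forall i, in_ideal F (f i)) -> in_ideal F (\sum_i f i).
Proof. by move=> hf; apply: big_ind => //; [exact: in_ideal0 | exact: in_idealD]. Qed.

Lemma in_ideal_nth j : (j < size F)%N -> in_ideal F F`_j.
Proof.
move=> hj; exists (fun k : 'I_(size F) => (val k == j)%:R).
rewrite (bigD1 (Ordinal hj)) //= eqxx mul1r big1 ?addr0 // => k hk.
by rewrite -(inj_eq val_inj) /= in hk; rewrite (negPf hk) mul0r.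
Qed.

End Ideal.

Section Pi.
Variables (K : fieldType) (n : nat).
Implicit Types (f : {poly {poly K}}) (c : 'cV[{poly K}]_n).

Lemma piE f r : Defs.pi n f r 0 = f`_(n.-1 - r).
Proof. by rewrite mxE. Qed.

Lemma coef_piinv c (r : 'I_n) : (piinv c)`_(n.-1 - r) = c r 0.
Proof.
rewrite /piinv coef_sum (bigD1 r) //= coefCM coefXn eqxx mulr1 big1 ?addr0 //.
move=> k hk; rewrite coefCM coefXn; case: eqP => [e|_]; last by rewrite mulr0.
exfalso; move/eqP: hk; apply; apply: val_inj => /=.
by have := ltn_ord r; have := ltn_ord k; lia.
Qed.

Lemma coef_piinv_rev c b (hb : (b < n)%N) : (piinv c)`_b = c (rev_ord (Ordinal hb)) 0.
Proof. by rewrite -coef_piinv /=; congr (_`_ _); lia. Qed.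

Lemma coef_piinv_ge c b : (n <= b)%N -> (piinv c)`_b = 0.
Proof.
move=> hb; rewrite /piinv coef_sum big1 // => k _; rewrite coefCM coefXn.
by case: eqP => [e|_]; [have := ltn_ord k; lia | rewrite mulr0].
Qed.

Lemma piinvK f : (size f <= n)%N -> piinv (Defs.pi n f) = f.
Proof.
move=> hf; apply/polyP => b; case: (ltnP b n) => hb.
  by rewrite coef_piinv_rev piE /=; congr (_`_ _); lia.
by rewrite coef_piinv_ge // nth_default //; apply: leq_trans hf hb.
Qed.

Lemma piinv_mulmx m (S : 'M[{poly K}]_(n, m)) (u : 'cV_m) :
  piinv (S *m u) = \sum_k (u k 0)%:P * piinv (col k S).
Proof.
apply/polyP => b; rewrite -[LHS]/((piinv (S *m u))`_b) [RHS]coef_sum.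
case: (ltnP b n) => hb.
  rewrite coef_piinv_rev mxE; apply: eq_bigr => k _.
  by rewrite coefCM coef_piinv_rev !mxE mulrC.
by rewrite coef_piinv_ge // big1 // => k _; rewrite coefCM coef_piinv_ge // mulr0.
Qed.

End Pi.

Lemma sum_ord_muln (R : zmodType) (f : nat -> R) t D :
  \sum_(k < t * D) f k = \sum_(j < t) \sum_(l < D) f (j * D + l)%N.
Proof.
elim: t => [|t IH]; first by rewrite mul0n !big_ord0.
by rewrite mulSnr big_split_ord IH big_ord_recr.
Qed.

Lemma size_poly_top (R : nzSemiRingType) (p : {poly R}) n :
  p`_n != 0 -> (forall b, (n < b)%N -> p`_b = 0) -> size p = n.+1.
Proof.
move=> pn_nz high; apply/eqP; rewrite eqn_leq; apply/andP; split.
  by apply/leq_sizeP => b; apply: high.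
by rewrite ltnNge; apply: contra pn_nz => /leq_sizeP/(_ n (leqnn n))/eqP.
Qed.

(* The summation order matches the column ordering of [Smat]. *)
Lemma coef_mul_rev (R : comNzRingType) (p q : {poly R}) D N :
  (size p <= D)%N ->
  (p * q)`_N = \sum_(l < D) ('X^(D.-1 - l) * q)`_N * p`_(D.-1 - l).
Proof.
move=> hp; have {1}-> : p = \sum_(e < D) p`_e *: 'X^e.
  rewrite -poly_def; apply/polyP => i; rewrite coef_poly.
  by case: ltnP => // hi; rewrite nth_default //; apply: leq_trans hp hi.
rewrite mulr_suml coef_sum; under eq_bigr => e _ do rewrite -scalerAl coefZ mulrC.
rewrite -(big_mkord xpredT (fun e => ('X^e * q)`_N * p`_e)) big_rev_mkord subn0.
by apply: eq_bigr => l _; rewrite subnS predn_sub.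
Qed.

Section SylvesterMatrix.
Variables (K : fieldType) (F : seq {poly {poly K}}) (dy D : nat).
Hypothesis size_F : forall f, f \in F -> (size f <= dy.+1)%N.

Lemma col_Smat (k : 'I_(size F * D)) :
  col k (Smat F dy D) = Defs.pi (dy + D) ('X^(D.-1 - k %% D) * F`_(k %/ D)).
Proof. by apply/matrixP => r j; rewrite !mxE. Qed.

Lemma size_comb (w : 'I_(size F) -> {poly {poly K}}) :
  (forall j, (size (w j) <= D)%N) -> (size (\sum_j w j * F`_j)%R <= dy + D)%N.
Proof.
move=> hw; apply: (big_ind (fun p : {poly {poly K}} => size p <= dy + D)%N)
  => [|p q hp hq|j _].
- by rewrite size_poly0.
- by apply: leq_trans (size_polyD _ _) _; rewrite geq_max hp hq.
- apply: leq_trans (size_polyMleq _ _) _.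
  have := hw j; have := size_F (mem_nth 0 (ltn_ord j)).
  by move: (size (w j)) (size F`_j) => a b; lia.
Qed.

Lemma in_ideal_piinv_Smat (u : 'cV_(size F * D)) :
  in_ideal F (piinv (Smat F dy D *m u)).
Proof.
rewrite piinv_mulmx; apply: in_ideal_sum => k; apply: in_idealMl.
have /andP[_ hD] : (0 < size F)%N && (0 < D)%N.
  by rewrite -muln_gt0; apply: leq_ltn_trans (ltn_ord k).
have hj : (k %/ D < size F)%N by rewrite ltn_divLR.
rewrite col_Smat piinvK; first exact/in_idealMl/in_ideal_nth.
apply: leq_trans (size_polyMleq _ _) _; rewrite size_polyXn.
by have := size_F (mem_nth 0 hj); move: (size F`_(k %/ D)) => s; lia.
Qed.

Lemma pi_comb_eq_Smat_mulmx (w : 'I_(size F) -> {poly {poly K}}) :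
  (forall j, (size (w j) <= D)%N) ->
  exists v, Defs.pi (dy + D) (\sum_j w j * F`_j) = Smat F dy D *m v.
Proof.
move=> hw; pose wn j := if insub j is Some o then w o else 0.
exists (\col_(k < size F * D) (wn (k %/ D)%N)`_(D.-1 - k %% D)%N).
apply/matrixP => r z; rewrite !mxE coef_sum.
under [RHS]eq_bigr => k _ do rewrite !mxE.
rewrite (sum_ord_muln (fun k => ('X^(D.-1 - k %% D)%N * F`_(k %/ D)%N)`_((dy + D).-1 - r)
   * (wn (k %/ D)%N)`_(D.-1 - k %% D)%N)).
apply: eq_bigr => j _; rewrite (coef_mul_rev _ _ (hw j)); apply: eq_bigr => l _.
have hD : (0 < D)%N by apply: leq_ltn_trans (ltn_ord l).
rewrite divnMDl // divn_small // addn0 modnMDl modn_small //.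
by rewrite /wn valK.
Qed.

End SylvesterMatrix.

Section ZeroDimensional.
Variables (K : fieldType) (F : seq {poly {poly K}}).
Hypothesis F_zero_dim : zero_dim F.

Lemma zero_dim_lin_dep (p : nat -> {poly {poly K}}) :
  exists N (lam : 'rV[K]_N.+1),
    lam != 0 /\ in_ideal F (\sum_j (lam 0 j)%:P%:P * p j).
Proof.
case: F_zero_dim => _ [B hB].
have [c hc] := fin_all_exists (fun j : 'I_(size B).+1 => hB (p j)).
pose C := \matrix_(j, k) c j k.
have /rowV0Pn[lam /sub_kermxP lamC lam_nz] : kermx C != 0.
  by rewrite kermx_eq0 -row_leq_rank; have := rank_leq_col C; lia.
exists (size B), lam; split => //.
have lamc k : \sum_j lam 0 j * c j k = 0.
  move/(congr1 (fun M : 'rV_(size B) => M 0 k)): lamC.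
  by rewrite !mxE; under eq_bigr do rewrite mxE.
rewrite (_ : \sum_j _ = \sum_j (lam 0 j)%:P%:P * (p j - \sum_k (c j k)%:P%:P * B`_k)).
  by apply: in_ideal_sum => j; apply: in_idealMl.
under [RHS]eq_bigr => j _ do rewrite mulrBr mulr_sumr.
rewrite sumrB exchange_big /= [X in _ - X]big1 ?subr0 // => k _.
under eq_bigr => j _ do rewrite mulrA -!polyCM.
by rewrite -mulr_suml -!rmorph_sum /= lamc !polyC0 mul0r.
Qed.

Lemma rVpolyE d (lam : 'rV[K]_d) : rVpoly lam = \sum_j lam 0 j *: 'X^j.
Proof.
rewrite {1}(row_sum_delta lam) linear_sum.
by apply: eq_bigr => j _; rewrite linearZ /= rVpoly_delta.
Qed.

Lemma rVpoly_eq0 d (lam : 'rV[K]_d) : (rVpoly lam == 0) = (lam == 0).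
Proof.
apply/eqP/eqP => [h|->]; last exact: linear0.
by rewrite -[lam]rVpolyK h linear0.
Qed.

Lemma zero_dim_univariate_x : exists2 q : {poly K}, q != 0 & in_ideal F q%:P.
Proof.
have [N [lam [lam_nz hI]]] := zero_dim_lin_dep (fun j => ('X^j)%:P).
exists (rVpoly lam); first by rewrite rVpoly_eq0.
rewrite rVpolyE rmorph_sum; congr (in_ideal F _): hI.
by apply: eq_bigr => j _; rewrite -polyCM mul_polyC.
Qed.

Lemma zero_dim_univariate_y :
  exists2 q : {poly K}, q != 0 & in_ideal F q^:P.
Proof.
have [N [lam [lam_nz hI]]] := zero_dim_lin_dep (fun j => 'X^j).
exists (rVpoly lam); first by rewrite rVpoly_eq0.
rewrite rVpolyE rmorph_sum; congr (in_ideal F _): hI.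
by apply: eq_bigr => j _; rewrite -mul_polyC rmorphM /= map_polyC map_polyXn.
Qed.

Lemma groebner_ydeg0 G : groebner F G -> exists2 g, g \in G & ydeg g = 0%N.
Proof.
case=> _ hgb; have [q q_nz hI] := zero_dim_univariate_x.
have qC_nz : q%:P != 0 by rewrite polyC_eq0.
have [g hg /andP[_ hd]] := hgb _ hI qC_nz.
by exists g => //; move: hd; rewrite /mdiv /lm /ydeg size_polyC q_nz /= => /andP[_]; lia.
Qed.

Lemma groebner_lead_coef_const G :
  groebner F G -> exists2 g, g \in G & (size (lead_coef g) <= 1)%N.
Proof.
case=> _ hgb; have [q q_nz hI] := zero_dim_univariate_y.
have qP_nz : q^:P != 0 by rewrite map_polyC_eq0.
have [g hg /andP[g_nz hd]] := hgb _ hI qP_nz.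
have lcq : (size (lead_coef q^:P) <= 1)%N.
  by rewrite (lead_coef_map_inj polyC_inj (polyC0 _)) size_polyC leq_b1.
exists g => //; move: hd lcq; rewrite /mdiv /lm /= => /andP[+ _].
by move: (size (lead_coef g)) (size (lead_coef q^:P)) => a b; lia.
Qed.

End ZeroDimensional.

Section ReducedGroebner.
Variables (K : fieldType) (F G : seq {poly {poly K}}).

Lemma memG_nth g : g \in G -> exists2 j, (j < size G)%N & g = G`_j.
Proof. by case/(nthP 0) => j hj <-; exists j. Qed.

Lemma coef2_lm (p : {poly {poly K}}) : coef2 p (lm p).1 (lm p).2 = lc2 p.
Proof. by rewrite /coef2 /lm /ydeg /lc2 /= -!lead_coefE. Qed.

Lemma reduced_mem g : reduced G -> g \in G -> g != 0 /\ lc2 g = 1.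
Proof. by move=> hr /(nthP 0)[k hk <-]; have [] := hr k hk. Qed.

Lemma reduced_size_lead_coef j k :
  reduced G -> (j < size G)%N -> (k < size G)%N -> j != k ->
  (ydeg G`_j <= ydeg G`_k)%N -> (size (lead_coef G`_k) < size (lead_coef G`_j))%N.
Proof.
move=> hr hj hk hjk hy; have [_ lc_k hd] := hr k hk.
have := hd j hj hjk (lm G`_k).1 (lm G`_k).2.
rewrite coef2_lm lc_k oner_neq0 -surjective_pairing => /(_ isT).
rewrite /mdiv /lm /= hy andbT -ltnNge.
by move: (size (lead_coef G`_k)) (size (lead_coef G`_j)) => a b; lia.
Qed.

Lemma mlt_trans : transitive mlt.
Proof. by move=> [a2 b2] [a1 b1] [a3 b3]; rewrite /mlt /=; lia. Qed.

Lemma sorted_ydeg j k :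
  sorted (fun g h => mlt (lm h) (lm g)) G -> (j <= k < size G)%N ->
  (ydeg G`_k <= ydeg G`_j)%N.
Proof.
move=> hs /andP[]; rewrite leq_eqVlt => /orP[/eqP -> //|hjk hk].
have tr : transitive (fun g h : {poly {poly K}} => mlt (lm h) (lm g)).
  by move=> y x z h1 h2; apply: mlt_trans h2 h1.
have := sorted_ltn_nth tr 0 hs j k; rewrite !inE => /(_ (ltn_trans hjk hk) hk hjk).
by rewrite /mlt /lm /= => /orP[|/andP[/eqP + _]]; lia.
Qed.

Lemma size_NF_le q r i :
  groebner F G -> is_NF F G q r -> (size q <= i)%N -> (size r <= i)%N.
Proof.
move=> [_ hgb] [hI hred] hq; rewrite leqNgt; apply/negP => hlt.
have hqr : (size q < size (- r))%N by rewrite size_polyN; apply: leq_ltn_trans hq hlt.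
have r_nz : r != 0 by rewrite -size_poly_gt0 -(size_polyN r); apply: leq_ltn_trans hqr.
have qr_nz : q - r != 0 by rewrite addrC -size_poly_gt0 size_polyDl // size_polyN size_poly_gt0.
have lm_qr : lm (q - r) = lm r.
  by rewrite /lm /ydeg addrC lead_coefDl // size_polyDl // lead_coefN !size_polyN.
have [g hg /andP[_ hd]] := hgb _ hI qr_nz.
have : coef2 r (lm r).1 (lm r).2 != 0 by rewrite coef2_lm /lc2 !lead_coef_eq0.
by move/hred/(_ g hg); rewrite -surjective_pairing -lm_qr hd.
Qed.

End ReducedGroebner.

Section DetachingBasis.
Variables (K : fieldType) (F G : seq {poly {poly K}}) (A : nat -> {poly {poly K}}).
Hypotheses (F_zero_dim : zero_dim F) (G_rGB : is_rGB F G) (A_def : is_Aseq F G A).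

Let G_groebner : groebner F G. Proof. by case: G_rGB. Qed.
Let G_reduced : reduced G. Proof. by case: G_rGB. Qed.
Let G_sorted : sorted (fun g h => mlt (lm h) (lm g)) G. Proof. by case: G_rGB. Qed.

Let G_nonempty : (0 < size G)%N.
Proof.
case: (groebner_ydeg0 F_zero_dim G_groebner) => g /memG_nth[j hj _] _.
exact: leq_ltn_trans (leq0n j) hj.
Qed.

Lemma ns_eq0 : ns G = 0%N.
Proof.
have [g /(nthP 0)[k hk <-] ydeg0] := groebner_ydeg0 F_zero_dim G_groebner.
rewrite /ns -nth_last; apply/eqP; rewrite -leqn0 -ydeg0.
by apply: (sorted_ydeg G_sorted); rewrite -ltnS prednK // hk; apply: leqnn.
Qed.

(* The invariant propagated along the recursion defining A. *)
Definition Aspec i : Prop :=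
  [/\ in_ideal F (A i), size (A i) = i.+1,
      exists2 g, g \in G & (ydeg g <= i)%N /\ lead_coef (A i) = lead_coef g,
      forall g, g \in G -> (ydeg g <= i)%N ->
        (size (lead_coef (A i)) <= size (lead_coef g))%N &
      forall b a, (b < i)%N -> coef2 (A i) a b != 0 ->
        forall g, g \in G -> ~~ mdiv (lm g) (a, b)].

Lemma Aspec_nth i k : (k < size G)%N -> ydeg G`_k = i -> Aspec i.
Proof.
move=> hk hki; have [Gk_nz _ hd] := G_reduced hk.
rewrite /Aspec; have [_ /(_ k hk hki) -> _] := A_def i; split => //.
- by case: G_groebner => + _; apply; apply: mem_nth.
- by rewrite -hki /ydeg prednK // size_poly_gt0.
- by exists G`_k; [apply: mem_nth | rewrite hki].
- move=> g /(nthP 0)[j hj <-] hy; case: (eqVneq j k) => [->//|hjk].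
  by apply/ltnW/reduced_size_lead_coef; rewrite ?hki.
- move=> b a hb hc g /(nthP 0)[j hj <-]; case: (eqVneq j k) => [->|hjk].
    by rewrite /mdiv /lm /= hki [(i <= b)%N]leqNgt hb andbF.
  exact: hd j hj hjk a b hc.
Qed.

Lemma Aspec_step i :
  (forall k, (k < size G)%N -> ydeg G`_k != i.+1) -> Aspec i -> Aspec i.+1.
Proof.
move=> no_k [Ai_in size_Ai lc_Ai min_Ai red_Ai].
have [_ _ /(_ _ no_k)] := A_def i.+1; rewrite ns_eq0 => /(_ isT) [r [hNF /= eA]].
set q := take_poly i.+1 ('X * A i) in hNF eA.
have size_r : (size r <= i.+1)%N by apply: size_NF_le G_groebner hNF (size_take_poly _ _).
have coef_A b : (A i.+1)`_b = if (b < i.+1)%N then r`_b else ('X * A i)`_b.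
  rewrite eA coefD coefB coef_take_poly; case: ifP => hb; first by rewrite subrr add0r.
  by rewrite subr0 [r`_b]nth_default ?addr0 //; apply: leq_trans size_r _; rewrite leqNgt hb.
have top_A : (A i.+1)`_i.+1 = lead_coef (A i).
  by rewrite coef_A ltnn coefXM /= lead_coefE size_Ai.
have size_A : size (A i.+1) = i.+2.
  apply: size_poly_top; first by rewrite top_A lead_coef_eq0 -size_poly_gt0 size_Ai.
  move=> b hb; rewrite coef_A ltnNge ltnW //= coefXM.
  by case: b hb => // b hb; rewrite nth_default // size_Ai.
have lcA : lead_coef (A i.+1) = lead_coef (A i) by rewrite lead_coefE size_A.
split => //.
- have -> : A i.+1 = 'X * A i - (q - r) by rewrite eA opprB addrCA addrC.
  by apply: in_idealB; [exact: in_idealMl | case: hNF].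
- by rewrite lcA; case: lc_Ai => g hg [hy ->]; exists g => //; split => //; apply: leqW.
- move=> g hg; rewrite lcA leq_eqVlt => /orP[/eqP hy|]; last exact: min_Ai.
  by case/(nthP 0): hg hy => j hj <- /eqP; rewrite (negPf (no_k j hj)).
- by move=> b a hb; rewrite /coef2 coef_A hb; case: hNF => _; apply.
Qed.

Lemma Aspec_all i : Aspec i.
Proof.
elim: i => [|i IH].
  have [g /(nthP 0)[k hk <-] ydeg0] := groebner_ydeg0 F_zero_dim G_groebner.
  exact: Aspec_nth hk ydeg0.
have [k ydeg_k|no_k] := pickP (fun k : 'I_(size G) => ydeg G`_k == i.+1).
  exact: Aspec_nth (ltn_ord k) (eqP ydeg_k).
apply: Aspec_step IH => k hk; have := no_k (Ordinal hk); by move=> /= ->.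
Qed.

Lemma size_lead_coef_A_le i p : in_ideal F p -> size p = i.+1 ->
  (size (lead_coef (A i)) <= size (lead_coef p))%N.
Proof.
move=> hp size_p; have [_ _ _ min_Ai _] := Aspec_all i.
have p_nz : p != 0 by rewrite -size_poly_gt0 size_p.
have [g hg /andP[_]] := G_groebner.2 _ hp p_nz.
rewrite /mdiv /lm /ydeg size_p /= => /andP[hx hy].
have := min_Ai g hg hy; have : lead_coef p != 0 by rewrite lead_coef_eq0.
rewrite -size_poly_gt0; move: hx.
by move: (size (lead_coef p)) (size (lead_coef g)) (size (lead_coef (A i))) => a b c; lia.
Qed.

Lemma lead_coef_A_dvdp i p : in_ideal F p -> size p = i.+1 ->
  lead_coef (A i) %| lead_coef p.
Proof.
move=> hp size_p; have [Ai_in size_Ai _ _ _] := Aspec_all i.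
set d := lead_coef (A i); set c := lead_coef p.
have d_nz : d != 0 by rewrite lead_coef_eq0 -size_poly_gt0 size_Ai.
apply/modp_eq0P/eqP; apply: contraT => cd_nz.
pose p' := p - (c %/ d)%:P * A i.
have p'_top : p'`_i = c %% d.
  have [pi_c Ai_d] : p`_i = c /\ (A i)`_i = d by rewrite /c /d !lead_coefE size_p size_Ai.
  by rewrite /p' coefB coefCM pi_c Ai_d {1}(divp_eq c d) addrC addKr.
have size_p' : size p' = i.+1.
  apply: size_poly_top; first by rewrite p'_top.
  by move=> b hb; rewrite /p' coefB coefCM !nth_default ?mulr0 ?subr0 ?size_Ai ?size_p.
have p'_in : in_ideal F p' by apply: in_idealB => //; apply: in_idealMl.
have := size_lead_coef_A_le p'_in size_p'.
by rewrite -/d [lead_coef p']lead_coefE size_p' p'_top leqNgt ltn_modp d_nz.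
Qed.

Lemma lead_coef_A_monic i : lead_coef (A i) \is monic.
Proof.
have [_ _ [g /(reduced_mem G_reduced) [_ lc_g] [_ ->]] _ _] := Aspec_all i.
by rewrite monicE; apply/eqP.
Qed.

Lemma size_coef_A_lt k i : (k < i)%N ->
  (size ((A i)`_k)%R < size (lead_coef (A k)))%N.
Proof.
move=> hki; have [_ _ _ _ red_Ai] := Aspec_all i.
have [_ _ [g hg [ydeg_g ->]] _ _] := Aspec_all k.
have [g_nz _] := reduced_mem G_reduced hg.
have : (0 < size (lead_coef g))%N by rewrite size_poly_gt0 lead_coef_eq0.
suff : (size ((A i)`_k)%R <= (size (lead_coef g)).-1)%N.
  by move: (size ((A i)`_k)%R) (size (lead_coef g)) => a b; lia.
apply/leq_sizeP => a ha; apply/eqP; apply: contraT => hc.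
by have := red_Ai k a hki hc g hg; rewrite /mdiv /lm /= ha ydeg_g.
Qed.

Lemma size_lead_coef_G0 : size (lead_coef G`_0) = 1%N.
Proof.
have [_ /memG_nth[j hj ->] lc_j] := groebner_lead_coef_const F_zero_dim G_groebner.
have [G0_nz _] := reduced_mem G_reduced (mem_nth 0 G_nonempty).
have : (0 < size (lead_coef G`_0))%N by rewrite size_poly_gt0 lead_coef_eq0.
case: (eqVneq j 0%N) => [j0 | j_nz]; first by move: lc_j; rewrite j0; lia.
have ydeg_j : (ydeg G`_j <= ydeg G`_0)%N by apply: (sorted_ydeg G_sorted); rewrite hj.
by have := reduced_size_lead_coef G_reduced hj G_nonempty j_nz ydeg_j; move: lc_j; lia.
Qed.

Lemma A_n0_monic : A (n0 G) \is monic.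
Proof.
have ydeg_G0 : ydeg G`_0 = n0 G by rewrite /n0 nth0.
have [_ /(_ 0%N G_nonempty ydeg_G0) -> _] := A_def (n0 G).
have [_] := reduced_mem G_reduced (mem_nth 0 G_nonempty).
rewrite monicE /lc2 lead_coefE size_lead_coef_G0 => lc_G0.
by rewrite (size1_polyC (eq_leq size_lead_coef_G0)) lc_G0.
Qed.

Lemma A_not_monic i : (i < n0 G)%N -> A i \isn't monic.
Proof.
move=> hi; rewrite monicE.
have [_ _ [_ /memG_nth[j hj ->] [ydeg_j ->]] _ _] := Aspec_all i.
have j_nz : j != 0%N by apply: contraTneq hi => j0; rewrite /n0 -nth0 -j0 -leqNgt.
have ydeg_0 : (ydeg G`_j <= ydeg G`_0)%N by apply: (sorted_ydeg G_sorted); rewrite hj.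
have := reduced_size_lead_coef G_reduced hj G_nonempty j_nz ydeg_0.
by rewrite size_lead_coef_G0; apply: contraL => /eqP ->; rewrite size_poly1.
Qed.

End DetachingBasis.

Section LowerEchelon.
Variables (R : nzRingType) (m n Kc : nat) (H : 'M[R]_(m, n)) (piv : 'I_n -> 'I_m).
Hypothesis piv_mono :
  forall j1 j2 : 'I_n, (j1 < j2)%N -> (j2 < Kc)%N -> (piv j1 < piv j2)%N.

Lemma echelon_mulmx_lead (w : 'cV_n) :
  (forall j : 'I_n, (Kc <= j)%N -> col j H = 0) ->
  (forall j : 'I_n, (j < Kc)%N -> forall r : 'I_m, (r < piv j)%N -> H r j = 0) ->
  H *m w != 0 ->
  exists j0 : 'I_n, [/\ (j0 < Kc)%N, w j0 0 != 0,
    forall r : 'I_m, (r < piv j0)%N -> (H *m w) r 0 = 0 &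
    (H *m w) (piv j0) 0 = H (piv j0) j0 * w j0 0].
Proof.
move=> H_zero H_above Hw_nz.
have H_zero_at r (k : 'I_n) : (Kc <= k)%N -> H r k = 0.
  by move=> hk; have /matrixP/(_ r 0) := H_zero k hk; rewrite !mxE.
pose Q (o : 'I_n) := (o < Kc)%N && (w o 0 != 0).
have [j0 Q_j0 | no_j] := pickP Q; last first.
  case/eqP: Hw_nz; apply/matrixP => r z; rewrite !mxE (ord1 z) big1 // => k _.
  have := no_j k; rewrite /Q; case: ltnP => [_ /= /negbFE/eqP -> | hk _]; first by rewrite mulr0.
  by rewrite H_zero_at ?mul0r.
case: (arg_minnP val Q_j0) => o /andP[o_lt w_o] o_min.
have Hw_upto (r : 'I_m) : (r <= piv o)%N -> (H *m w) r 0 = H r o * w o 0.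
  move=> hr; rewrite mxE (bigD1 o) //= big1 ?addr0 // => k k_o.
  case: (ltnP k Kc) => [k_lt | /(H_zero_at r) ->]; last by rewrite mul0r.
  case: (ltngtP k o) => [k_o' | o_k | /val_inj k_eq]; last by rewrite k_eq eqxx in k_o.
  - suff /eqP -> : w k 0 == 0 by rewrite mulr0.
    by apply: contraTT k_o' => w_k; rewrite -leqNgt o_min // /Q k_lt.
  - by rewrite H_above ?mul0r //; apply: leq_ltn_trans hr (piv_mono o_k k_lt).
exists o; split => //; last exact: Hw_upto.
by move=> r hr; rewrite Hw_upto ?(ltnW hr) // H_above ?mul0r.
Qed.

End LowerEchelon.

Section LastPivots.
Variables (m n Kc : nat) (piv : 'I_n -> 'I_m).
Hypothesis piv_mono :
  forall j1 j2 : 'I_n, (j1 < j2)%N -> (j2 < Kc)%N -> (piv j1 < piv j2)%N.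
Hypothesis Kc_le_n : (Kc <= n)%N.

(* Pivot rows indexed by nat (0 outside 'I_n), so that the counting argument
   below needs no ordinal casts. *)
Definition pivn (k : nat) : nat := if insub k is Some j then val (piv j) else 0.

Lemma pivn_ord (j : 'I_n) : pivn j = piv j.
Proof. by rewrite /pivn valK. Qed.

Lemma pivn_lt_m k : (k < Kc)%N -> (pivn k < m)%N.
Proof. by move=> hk; rewrite -[k]/(val (Ordinal (leq_trans hk Kc_le_n))) pivn_ord. Qed.

Lemma pivn_mono k1 k2 : (k1 < k2)%N -> (k2 < Kc)%N -> (pivn k1 < pivn k2)%N.
Proof.
move=> h12 h2; have h1 := ltn_trans h12 h2.
rewrite -[k1]/(val (Ordinal (leq_trans h1 Kc_le_n))).
by rewrite -[k2]/(val (Ordinal (leq_trans h2 Kc_le_n))) !pivn_ord piv_mono.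
Qed.

Lemma pivn_inj k1 k2 : (k1 < Kc)%N -> (k2 < Kc)%N -> pivn k1 = pivn k2 -> k1 = k2.
Proof.
move=> h1 h2 e; case: (ltngtP k1 k2) => // [lt12 | lt21].
  by have := pivn_mono lt12 h2; rewrite e ltnn.
by have := pivn_mono lt21 h1; rewrite e ltnn.
Qed.

Lemma pivn_gap k1 k2 : (k1 <= k2)%N -> (k2 < Kc)%N -> (k2 - k1 <= pivn k2 - pivn k1)%N.
Proof.
elim: k2 => [|k IH]; first by rewrite leqn0 => /eqP ->.
rewrite leq_eqVlt => /orP[/eqP -> | hk1] hk; first by rewrite !subnn.
have := pivn_mono (ltnSn k) hk; move: hk1; rewrite ltnS leq_eqVlt.
case/orP=> [/eqP -> | hk1]; first lia.
by have := IH (ltnW hk1) (ltnW hk); lia.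
Qed.

(* The pivot rows m-1, ..., m-1-i are hit by strictly decreasing columns. *)
Lemma pivn_hit_lt i j : (i < m)%N ->
  (forall k, (k <= i)%N -> exists2 j, (j < Kc)%N & pivn j = (m.-1 - k)%N) ->
  (j < Kc)%N -> pivn j = (m.-1 - i)%N -> (j + i < Kc)%N.
Proof.
elim: i j => [|i IH] j him hit hj piv_j; first by rewrite addn0.
have [j' hj' piv_j'] := hit i (leqnSn i).
have lt_j : (j < j')%N.
  rewrite ltnNge; apply/negP => le_j; have := pivn_lt_m hj.
  move: le_j; rewrite leq_eqVlt => /orP[/eqP e | lt_j'].
    by move: piv_j piv_j'; rewrite e; lia.
  by have := pivn_mono lt_j' hj; lia.
by have := IH j' (ltnW him) (fun k hk => hit k (leqW hk)) hj' piv_j'; lia.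
Qed.

Lemma last_pivots N : (N < m)%N ->
  (forall i, (i <= N)%N -> exists2 j, (j < Kc)%N & pivn j = (m.-1 - i)%N) ->
  forall i, (i <= N)%N -> (i < Kc)%N /\ pivn (Kc.-1 - i) = (m.-1 - i)%N.
Proof.
move=> Nm hit i hi; have [j hj piv_j] := hit i hi.
have hit_i k : (k <= i)%N -> exists2 j, (j < Kc)%N & pivn j = (m.-1 - k)%N.
  by move=> hk; apply: hit (leq_trans hk hi).
have j_i := pivn_hit_lt (leq_ltn_trans hi Nm) hit_i hj piv_j.
have last_lt : (Kc.-1 < Kc)%N by move: hj; lia.
have le_j : (j <= Kc.-1)%N by move: hj; lia.
have := pivn_gap le_j last_lt; have := pivn_lt_m last_lt; rewrite piv_j => piv_last gap.
have e : j = (Kc.-1 - i)%N by move: j_i; lia.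
by split; [lia | rewrite -e].
Qed.

End LastPivots.

Section ColumnPolynomials.
Variables (K : fieldType) (m n : nat) (H : 'M[{poly K}]_(m, n)).

Lemma colpolyE (j : 'I_n) : colpoly H j = piinv (col j H).
Proof. by rewrite /colpoly valK. Qed.

Lemma coef_colpoly (j : 'I_n) b (hb : (b < m)%N) :
  (colpoly H j)`_b = H (rev_ord (Ordinal hb)) j.
Proof. by rewrite colpolyE coef_piinv_rev mxE. Qed.

Lemma coef_colpoly_ge (j : 'I_n) b : (m <= b)%N -> (colpoly H j)`_b = 0.
Proof. by move=> hb; rewrite colpolyE coef_piinv_ge. Qed.

Lemma colpoly_pivot (j : 'I_n) (r : 'I_m) :
  H r j != 0 -> (forall r' : 'I_m, (r' < r)%N -> H r' j = 0) ->
  size (colpoly H j) = (m.-1 - r).+1 /\ lead_coef (colpoly H j) = H r j.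
Proof.
move=> Hrj_nz above_r; have hb : (m.-1 - r < m)%N by have := ltn_ord r; lia.
have top : (colpoly H j)`_(m.-1 - r) = H r j.
  by rewrite coef_colpoly; congr (H _ j); apply: val_inj => /=; have := ltn_ord r; lia.
have size_B : size (colpoly H j) = (m.-1 - r).+1.
  apply: size_poly_top; first by rewrite top.
  move=> b hb'; case: (ltnP b m) => [b_lt | /coef_colpoly_ge //].
  by rewrite coef_colpoly above_r //=; have := ltn_ord r; lia.
by split; rewrite // lead_coefE size_B.
Qed.

End ColumnPolynomials.

Section HermiteDetachingBasis.
Variables (K : fieldType) (F : seq {poly {poly K}}) (dy D : nat).
Variables (G : seq {poly {poly K}}) (A : nat -> {poly {poly K}}) (Kc : nat).
Variables (H : 'M[{poly K}]_(dy + D, size F * D)) (U : 'M[{poly K}]_(size F * D)).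
Variable piv : 'I_(size F * D) -> 'I_(dy + D).
Hypotheses (size_F : forall f, f \in F -> (size f <= dy.+1)%N) (F_zero_dim : zero_dim F).
Hypotheses (G_rGB : is_rGB F G) (A_def : is_Aseq F G A) (A_Delta : Delta_ok F G A D).
Hypotheses (U_unit : U \in unitmx) (H_def : H = Smat F dy D *m U).
Hypotheses (Kc_le : (Kc <= size F * D)%N)
  (H_zero : forall j : 'I_(size F * D), (Kc <= j)%N -> col j H = 0)
  (H_piv : forall j : 'I_(size F * D), (j < Kc)%N ->
     [/\ H (piv j) j \is monic,
         forall r : 'I_(dy + D), (r < piv j)%N -> H r j = 0 &
         forall j' : 'I_(size F * D), (j' < j)%N ->
           (size (H (piv j) j') < size (H (piv j) j))%N])
  (piv_mono : forall j1 j2 : 'I_(size F * D), (j1 < j2)%N -> (j2 < Kc)%N ->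
     (piv j1 < piv j2)%N).

Local Notation m := (dy + D)%N.

Lemma in_ideal_colpoly j : in_ideal F (colpoly H j).
Proof.
rewrite /colpoly; case: insubP => [o _ _ | _]; last exact: in_ideal0.
by rewrite H_def colE -mulmxA -colE; apply: in_ideal_piinv_Smat.
Qed.

Lemma A_in_colspan i : (i <= n0 G)%N ->
  (size (A i) <= m)%N /\ exists w, Defs.pi m (A i) = H *m w.
Proof.
move=> hi; have hi' : (ns G <= i <= n0 G)%N by rewrite (ns_eq0 F_zero_dim G_rGB).
have [w [size_w ->]] := A_Delta hi'.
split; first exact: size_comb.
have [v ->] := pi_comb_eq_Smat_mulmx dy size_w.
by exists (invmx U *m v); rewrite H_def -mulmxA (mulmxA U) mulmxV // mul1mx.
Qed.

Let Aspec_i := Aspec_all F_zero_dim G_rGB A_def.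

Let H_above (j : 'I_(size F * D)) :
  (j < Kc)%N -> forall r : 'I_m, (r < piv j)%N -> H r j = 0.
Proof. by move=> hj; case: (H_piv hj). Qed.

Lemma n0_lt_m : (n0 G < m)%N.
Proof.
have [size_A _] := A_in_colspan (leqnn _); have [_ size_An0 _ _ _] := Aspec_i (n0 G).
by rewrite size_An0 in size_A.
Qed.

Lemma A_pivot i : (i <= n0 G)%N -> exists j : 'I_(size F * D),
  [/\ (j < Kc)%N, val (piv j) = (m.-1 - i)%N & H (piv j) j %| lead_coef (A i)].
Proof.
move=> hi; have [_ [w Aw]] := A_in_colspan hi; have [_ size_A _ _ _] := Aspec_i i.
have i_lt : (i < m)%N := leq_ltn_trans hi n0_lt_m.
have r_lt : (m.-1 - i < m)%N by lia.
pose r := Ordinal r_lt.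
have lcA_nz : lead_coef (A i) != 0 by rewrite lead_coef_eq0 -size_poly_gt0 size_A.
have Hw_r : (H *m w) r 0 = lead_coef (A i).
  by rewrite -Aw piE lead_coefE size_A /=; congr (_`_ _); lia.
have Hw_above (r' : 'I_m) : (r' < r)%N -> (H *m w) r' 0 = 0.
  by move=> hr'; rewrite -Aw piE nth_default // size_A; move: hr'; rewrite /r /=; lia.
have Hw_nz : H *m w != 0.
  by apply: contraNneq lcA_nz => Hw0; rewrite -Hw_r Hw0 mxE.
have [j [hj w_j above_j Hw_j]] := echelon_mulmx_lead piv_mono H_zero H_above Hw_nz.
have Hw_j_nz : H (piv j) j * w j 0 != 0.
  by case: (H_piv hj) => mon _ _; rewrite mulf_neq0 // monic_neq0.
exists j; case: (ltngtP (piv j) r) => [lt_r | gt_r | eq_r].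
- by case/eqP: Hw_j_nz; rewrite -Hw_j Hw_above.
- by case/eqP: lcA_nz; rewrite -Hw_r above_j.
- by split; rewrite // -Hw_r (_ : r = piv j) ?Hw_j ?dvdp_mulIl //; apply: val_inj.
Qed.

Lemma last_column i : (i <= n0 G)%N -> exists j : 'I_(size F * D),
  [/\ val j = (Kc.-1 - i)%N, (i < Kc)%N, (j < Kc)%N, val (piv j) = (m.-1 - i)%N &
      H (piv j) j %| lead_coef (A i)].
Proof.
move=> hi; have hit k : (k <= n0 G)%N -> exists2 j, (j < Kc)%N & pivn piv j = (m.-1 - k)%N.
  by move=> hk; have [j [hj piv_j _]] := A_pivot hk; exists (val j); rewrite ?pivn_ord.
have [i_lt piv_last] := last_pivots piv_mono Kc_le n0_lt_m hit hi.
have [j [hj piv_j dvd_j]] := A_pivot hi; exists j; split => //.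
by apply: (pivn_inj piv_mono) => //; [lia | rewrite piv_last pivn_ord].
Qed.

Local Notation B i := (colpoly H (Kc.-1 - i)).

Lemma size_lead_coef_B i : (i <= n0 G)%N ->
  size (B i) = i.+1 /\ lead_coef (B i) = lead_coef (A i).
Proof.
move=> hi; have [j [<- _ hj piv_j dvd_j]] := last_column hi.
have [mon above _] := H_piv hj.
have [size_B lc_B] := colpoly_pivot (monic_neq0 mon) above.
have size_Bi : size (colpoly H j) = i.+1.
  by rewrite size_B piv_j; have := leq_ltn_trans hi n0_lt_m; lia.
split => //; apply/eqP; rewrite -eqp_monic ?(lead_coef_A_monic F_zero_dim G_rGB A_def) ?lc_B //.
by rewrite /eqp dvd_j -lc_B (lead_coef_A_dvdp F_zero_dim G_rGB A_def (in_ideal_colpoly _)).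
Qed.

Lemma size_coef_B_lt k i : (k < i)%N -> (i <= n0 G)%N ->
  (size ((B i)`_k)%R < size (lead_coef (A k)))%N.
Proof.
move=> hki hi; have hk := ltnW (leq_trans hki hi).
have [ji [val_ji i_lt _ _ _]] := last_column hi.
have [jk [val_jk _ hjk piv_jk _]] := last_column hk.
have [_ lc_Bk] := size_lead_coef_B hk.
have k_lt : (k < m)%N := leq_ltn_trans hk n0_lt_m.
rewrite -val_ji (coef_colpoly H ji k_lt) -lc_Bk -val_jk.
have [mon above red] := H_piv hjk; have [_ ->] := colpoly_pivot (monic_neq0 mon) above.
rewrite (_ : rev_ord _ = piv jk); last by apply: val_inj; rewrite /= piv_jk; lia.
by apply: red; rewrite val_ji val_jk; lia.
Qed.

Lemma colpoly_A i : (i <= n0 G)%N -> B i = A i.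
Proof.
move=> hi; have [size_B lc_B] := size_lead_coef_B hi; have [Ai_in size_A _ _ _] := Aspec_i i.
apply/eqP; rewrite -subr_eq0; apply: contraT; set E := B i - A i => E_nz.
have E_in : in_ideal F E by apply: in_idealB Ai_in; apply: in_ideal_colpoly.
have size_E : (size E <= i)%N.
  apply/leq_sizeP => b; rewrite leq_eqVlt coefB => /orP[/eqP <- | hb].
    have top (p : {poly {poly K}}) : size p = i.+1 -> p`_i = lead_coef p.
      by rewrite lead_coefE => ->.
    by rewrite !top // lc_B subrr.
  by rewrite !nth_default ?subrr // ?size_B ?size_A.
have [k size_Ek] : exists k, size E = k.+1.
  by exists (size E).-1; rewrite prednK // size_poly_gt0.
have k_lt : (k < i)%N by rewrite -size_Ek.
have := size_lead_coef_A_le F_zero_dim G_rGB A_def E_in size_Ek.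
rewrite [lead_coef E]lead_coefE size_Ek coefB leqNgt (leq_ltn_trans (size_polyD _ _)) //.
by rewrite size_polyN gtn_max size_coef_B_lt // (size_coef_A_lt F_zero_dim G_rGB A_def).
Qed.

Lemma last_columns_eq_A :
  (n0 G < Kc)%N /\ forall i, (i <= n0 G)%N -> colpoly H (Kc - i).-1 = A i.
Proof.
split; first by have [_ [_ n0_lt _ _ _]] := last_column (leqnn (n0 G)).
by move=> i hi; rewrite predn_sub; apply: colpoly_A.
Qed.

End HermiteDetachingBasis.

Lemma Delta_ok_le (K : fieldType) (F G : seq {poly {poly K}}) (A : nat -> {poly {poly K}}) d D :
  Delta_ok F G A d -> (d <= D)%N -> Delta_ok F G A D.
Proof.
move=> ok_d le_dD i hi; have [w [size_w ->]] := ok_d i hi.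
by exists w; split => // j; apply: leq_trans (size_w j) le_dD.
Qed.

Theorem proposition1 (K : fieldType) (F : seq {poly {poly K}}) (dy D : nat)
    (G : seq {poly {poly K}}) (A : nat -> {poly {poly K}}) (Kc : nat)
    (H : 'M[{poly K}]_(dy + D, size F * D)) (U : 'M[{poly K}]_(size F * D)) :
  (2 <= size F)%N ->
  (forall f, f \in F -> (size f <= dy.+1)%N) ->
  zero_dim F ->
  is_rGB F G ->
  is_Aseq F G A ->
  (exists Delta, is_Delta F G A Delta /\ (Delta <= D)%N) ->
  U \in unitmx -> H = Smat F dy D *m U -> is_HNF H Kc ->
  (exists k, (0 < k <= Kc)%N /\ colpoly H k.-1 \is monic) /\
  (forall K', (0 < K' <= Kc)%N -> colpoly H K'.-1 \is monic ->
     (forall k, (K' < k <= Kc)%N -> colpoly H k.-1 \isn't monic) ->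
     [seq colpoly H (Kc - i).-1 | i <- iota 0 (Kc - K').+1]
       = detaching_basis G A (n0 G)
     /\ forall i, (i <= n0 G)%N -> colpoly H (Kc - i).-1 = A i).
Proof.
move=> _ size_F F_zero_dim G_rGB A_def [Delta [[A_Delta _] le_D]] U_unit H_def.
move=> [Kc_le [H_zero [piv [H_piv piv_mono]]]].
have [n0_lt colA] := last_columns_eq_A size_F F_zero_dim G_rGB A_def
  (Delta_ok_le A_Delta le_D) U_unit H_def Kc_le H_zero H_piv piv_mono.
have A_n0 := A_n0_monic F_zero_dim G_rGB A_def.
split=> [|K' K'_range K'_monic K'_max].
  by exists (Kc - n0 G)%N; rewrite colA // A_n0; split=> //; lia.
have eK' : K' = (Kc - n0 G)%N.
  case: (ltngtP K' (Kc - n0 G)) => // [lt_K' | gt_K'].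
    have K'_lt : (K' < Kc - n0 G <= Kc)%N by lia.
    by have := K'_max _ K'_lt; rewrite colA // A_n0.
  have lt_n0 : (Kc - K' < n0 G)%N by lia.
  have := A_not_monic F_zero_dim G_rGB A_def lt_n0.
  by rewrite -colA ?(ltnW lt_n0) // subKn ?K'_monic //; lia.
split=> //; rewrite eK' subKn ?(ltnW n0_lt) // /detaching_basis (ns_eq0 F_zero_dim G_rGB) subn0.
by apply/eq_in_map => i; rewrite mem_iota => /andP[_ hi]; apply: colA.
Qed.
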